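(* Let $(\rho_0,p_0)$ be a solution of the TOV system on $[0,R)$ with regular centre, with mass function $m_0$, and let $$g_0(r)=\frac{m_0(r)+4\pi p_0(r)\,r^3}{r^2\,[1-2m_0(r)/r]},\qquad I_0(r)=\int_0^r g_0(s)\,ds .$$ For a real parameter $\delta p_c$ set $$D(r)=1+4\pi\,\delta p_c\int_0^r \frac{s\,e^{-2I_0(s)}}{\sqrt{1-2m_0(s)/s}}\,ds,\qquad \delta p(r)=\frac{\delta p_c\,\sqrt{1-2m_0(r)/r}\;e^{-2I_0(r)}}{D(r)} .$$ Then on every interval $[0,R')\subseteq[0,R)$ on which $D>0$, the pair $(\rho_0,\,p_0+\delta p)$ (same density, hence same mass function $m_0$) solves the TOV system with regular centre, and its central pressure is $p_0(0)+\delta p_c$. Conversely, every solution $(\rho_0,p)$ of the TOV system on $[0,R)$ with the same density $\rho_0$ and regular centre is of this form with $\delta p_c=p(0)-p_0(0)$.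
   Context: Units $G=c=1$. Given a continuous function $\rho$ on $[0,R)$ ($0<R\le\infty$), its mass function is $m(r)=4\pi\int_0^r\rho(s)s^2\,ds$. A pair $(\rho,p)$ with $\rho$ continuous and $p$ of class $C^1$ on $(0,R)$ ''solves the TOV system on $[0,R)$'' if $1-2m(r)/r>0$ for $0<r<R$ and $$\frac{dp}{dr}=-\frac{[\rho(r)+p(r)]\,[m(r)+4\pi p(r)r^3]}{r^2\,[1-2m(r)/r]}\quad (0<r<R).$$ It has ''regular centre'' if $\rho$ and $p$ extend continuously to $r=0$ with finite values $\rho(0)=\rho_c$ (central density) and $p(0)=p_c$ (central pressure). *)

From Stdlib Require Import Reals.
From Coquelicot Require Import Coquelicot.
Open Scope R_scope.

Definition mass (rho : R -> R) (r : R) : R :=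
  4 * PI * RInt (fun s => rho s * s ^ 2) 0 r.

Definition tov_rhs (rho p : R -> R) (r : R) : R :=
  - ((rho r + p r) * (mass rho r + 4 * PI * p r * r ^ 3))
    / (r ^ 2 * (1 - 2 * mass rho r / r)).

Definition solves_TOV (rho p : R -> R) (Rb : Rbar) : Prop :=
  filterlim rho (at_right 0) (locally (rho 0)) /\
  (forall r, 0 < r -> Rbar_lt r Rb -> continuous rho r) /\
  (forall r, 0 < r -> Rbar_lt r Rb -> ex_derive p r /\ continuous (Derive p) r) /\
  (forall r, 0 < r -> Rbar_lt r Rb -> 0 < 1 - 2 * mass rho r / r) /\
  (forall r, 0 < r -> Rbar_lt r Rb -> is_derive p r (tov_rhs rho p r)).

Definition regular_centre (rho p : R -> R) (pc : R) : Prop :=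
  filterlim rho (at_right 0) (locally (rho 0)) /\
  filterlim p (at_right 0) (locally pc).

Definition g0 (rho p : R -> R) (r : R) : R :=
  (mass rho r + 4 * PI * p r * r ^ 3) / (r ^ 2 * (1 - 2 * mass rho r / r)).

Definition I0 (rho p : R -> R) (r : R) : R := RInt (g0 rho p) 0 r.

Definition Dfun (rho p : R -> R) (dpc : R) (r : R) : R :=
  1 + 4 * PI * dpc *
      RInt (fun s => s * exp (-2 * I0 rho p s) / sqrt (1 - 2 * mass rho s / s)) 0 r.

Definition dpress (rho p : R -> R) (dpc : R) (r : R) : R :=
  dpc * sqrt (1 - 2 * mass rho r / r) * exp (-2 * I0 rho p r) / Dfun rho p dpc r.

From Stdlib Require Import Reals Lra.
From Coquelicot Require Import Coquelicot.
Open Scope R_scope.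

(* Write v = (p - p0) / (sqrt (1 - 2 m0 / r) e^(-2 I0)).  Subtracting the TOV equations of
   p and p0, which share the density and hence the mass function, leaves exactly the Riccati
   equation v' = -4 pi k v^2, where k is the integrand of D.  Its solution with v(0) = dpc is
   v = dpc / D, which gives the first part.  Conversely, along any solution
   (v D - dpc)' = -4 pi k v (v D - dpc), so (v D - dpc) exp (int 4 pi k v) is constant and
   vanishes at the centre; thus v D = dpc, so D never vanishes and, being 1 at the centre,
   stays positive.  Regularity at the centre (m0 = O(r^3)) keeps g0 and k bounded near 0,
   which makes I0 and int k primitives vanishing at r = 0. *)

Section FilterlimR.
Context {T : Type} {F : (T -> Prop) -> Prop} {FF : Filter F}.

Lemma filterlim_continuous (f : T -> R) (g : R -> R) a :
  filterlim f F (locally a) -> continuous g a ->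
  filterlim (fun x => g (f x)) F (locally (g a)).
Proof. intros Hf Hg; eapply filterlim_comp; eassumption. Qed.

Lemma filterlim_Rplus (f g : T -> R) a b :
  filterlim f F (locally a) -> filterlim g F (locally b) ->
  filterlim (fun x => f x + g x) F (locally (a + b)).
Proof.
intros Hf Hg; exact (filterlim_comp_2 _ _ _ Hf Hg (@filterlim_plus R_AbsRing R_NormedModule a b)).
Qed.

Lemma filterlim_Rmult (f g : T -> R) a b :
  filterlim f F (locally a) -> filterlim g F (locally b) ->
  filterlim (fun x => f x * g x) F (locally (a * b)).
Proof.
intros Hf Hg; exact (filterlim_comp_2 _ _ _ Hf Hg (@filterlim_mult R_AbsRing a b)).
Qed.

Lemma filterlim_Ropp (f : T -> R) a :
  filterlim f F (locally a) -> filterlim (fun x => - f x) F (locally (- a)).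
Proof.
intros Hf; exact (filterlim_continuous f Ropp a Hf (continuous_opp _ _ (continuous_id a))).
Qed.

Lemma filterlim_Rinv (f : T -> R) a :
  filterlim f F (locally a) -> a <> 0 -> filterlim (fun x => / f x) F (locally (/ a)).
Proof. intros Hf Ha; exact (filterlim_continuous f Rinv a Hf (continuous_Rinv a Ha)). Qed.

Lemma filterlim_sqrt (f : T -> R) a :
  filterlim f F (locally a) -> filterlim (fun x => sqrt (f x)) F (locally (sqrt a)).
Proof. intros Hf; exact (filterlim_continuous f sqrt a Hf (continuous_sqrt a)). Qed.

Lemma filterlim_exp (f : T -> R) a :
  filterlim f F (locally a) -> filterlim (fun x => exp (f x)) F (locally (exp a)).
Proof. intros Hf; exact (filterlim_continuous f exp a Hf (continuous_exp a)). Qed.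

Lemma filterlim_pow (f : T -> R) a n :
  filterlim f F (locally a) -> filterlim (fun x => f x ^ n) F (locally (a ^ n)).
Proof.
intros Hf; apply (filterlim_continuous f (fun y => y ^ n)); [exact Hf|].
apply continuity_pt_filterlim, derivable_continuous_pt, derivable_pt_pow.
Qed.

Lemma filterlim_locally_eq (f : T -> R) (a b : R) :
  filterlim f F (locally a) -> a = b -> filterlim f F (locally b).
Proof. now intros Hf <-. Qed.

End FilterlimR.

Lemma filterlim_id_at_right (x : R) : filterlim (fun y => y) (at_right x) (locally x).
Proof. intros P [e He]; exists e; intros y Hy _; exact (He y Hy). Qed.

Ltac filterlim_tac :=
  match goal with
  | |- filterlim (fun x => (@?f x) ^ ?n) _ _ => apply (filterlim_pow f); filterlim_tac
  | |- filterlim (fun x => @?f x + @?g x) _ _ => apply (filterlim_Rplus f g); filterlim_tac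
  | |- filterlim (fun x => @?f x * @?g x) _ _ => apply (filterlim_Rmult f g); filterlim_tac
  | |- filterlim (fun x => - @?f x) _ _ => apply (filterlim_Ropp f); filterlim_tac
  | |- filterlim (fun x => / @?f x) _ _ => apply (filterlim_Rinv f); [filterlim_tac|]
  | |- filterlim (fun x => sqrt (@?f x)) _ _ => apply (filterlim_sqrt f); filterlim_tac
  | |- filterlim (fun x => exp (@?f x)) _ _ => apply (filterlim_exp f); filterlim_tac
  | |- filterlim (fun x => ?c) _ _ => apply filterlim_const
  | |- filterlim (fun x : R => x) (at_right _) _ => apply filterlim_id_at_right
  | |- filterlim (fun x : R => x) (locally _) _ => apply filterlim_id
  | |- _ => eassumption
  end.

Lemma Rbar_lt_real_le (y : R) (Rb : Rbar) : Rbar_lt y Rb -> exists b : R, y < b /\ Rbar_le b Rb.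
Proof.
destruct Rb as [r| |]; simpl; intros H.
- exists r; split; [exact H | apply Rle_refl].
- exists (y + 1); split; [lra | exact I].
- contradiction.
Qed.

Lemma locally_in_interval (Rb : Rbar) r : 0 < r -> Rbar_lt r Rb ->
  locally r (fun y => 0 < y /\ Rbar_lt y Rb).
Proof.
intros Hr HrR; exact (open_and _ _ (open_gt 0) (open_Rbar_lt Rb) r (conj Hr HrR)).
Qed.

Lemma at_right_in_interval (Rb : Rbar) : Rbar_lt 0 Rb ->
  at_right 0 (fun y => 0 < y /\ Rbar_lt y Rb).
Proof.
intros H; destruct (open_Rbar_lt Rb 0 H) as [e He].
exists e; intros y Hy Hy0; exact (conj Hy0 (He y Hy)).
Qed.

Lemma const0_of_derive0_lim0 (f : R -> R) (Rb : Rbar) :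
  (forall r, 0 < r -> Rbar_lt r Rb -> is_derive f r 0) ->
  filterlim f (at_right 0) (locally 0) ->
  forall r, 0 < r -> Rbar_lt r Rb -> f r = 0.
Proof.
intros Hd Hlim r Hr HrR.
assert (Hin : forall y, 0 < y <= r -> 0 < y /\ Rbar_lt y Rb).
{ intros y Hy; split; [lra|]. apply Rbar_le_lt_trans with (Finite r); [simpl; lra | exact HrR]. }
assert (Hcst : forall y, 0 < y < r -> f y = f r).
{ intros y Hy.
  assert (Hcont : forall z, y <= z <= r -> continuity_pt f z).
  { intros z Hz; destruct (Hin z ltac:(lra)) as [Hz0 HzR].
    apply continuity_pt_filterlim, (ex_derive_continuous (V := R_NormedModule)).
    eexists; exact (Hd z Hz0 HzR). }
  destruct (fn_eq_Derive_eq f (fun _ => 0) y r) as [C HC].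
  - apply Hcont; lra.
  - apply Hcont; lra.
  - apply continuity_pt_const; intros a b; reflexivity.
  - apply continuity_pt_const; intros a b; reflexivity.
  - intros z Hz; destruct (Hin z ltac:(lra)) as [Hz0 HzR]; eexists; exact (Hd z Hz0 HzR).
  - intros z _; apply ex_derive_const.
  - intros z Hz; destruct (Hin z ltac:(lra)) as [Hz0 HzR].
    rewrite Derive_const; exact (is_derive_unique _ _ _ (Hd z Hz0 HzR)).
  - rewrite (HC y), (HC r); lra. }
apply (filterlim_locally_unique f (F := at_right 0)); [|exact Hlim].
apply filterlim_ext_loc with (fun _ => f r); [|apply filterlim_const].
exists (mkposreal r Hr); intros y Hy Hy0; symmetry; apply Hcst.
split; [exact Hy0|]. apply Rabs_lt_between' in Hy; simpl in Hy; lra.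
Qed.

Lemma pos_of_nonzero_lim (f : R -> R) (Rb : Rbar) l : 0 < l ->
  filterlim f (at_right 0) (locally l) ->
  (forall r, 0 < r -> Rbar_lt r Rb -> continuous f r) ->
  (forall r, 0 < r -> Rbar_lt r Rb -> f r <> 0) ->
  forall r, 0 < r -> Rbar_lt r Rb -> 0 < f r.
Proof.
intros Hl Hlim Hc Hnz r Hr HrR.
destruct (Rlt_le_dec 0 (f r)) as [Hpos|Hneg]; [exact Hpos|exfalso].
assert (Hin : forall y, 0 < y <= r -> 0 < y /\ Rbar_lt y Rb).
{ intros y Hy; split; [lra|]. apply Rbar_le_lt_trans with (Finite r); [simpl; lra | exact HrR]. }
assert (Hev : at_right 0 (fun z => 0 < f z /\ 0 < z < r)).
{ apply filter_and; [exact (Hlim _ (open_gt 0 l Hl))|].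
  exists (mkposreal r Hr); intros z Hz Hz0. apply Rabs_lt_between' in Hz; simpl in Hz; lra. }
destruct (filter_ex _ Hev) as [z [Hfz Hz]].
destruct (Ranalysis5.IVT_interv (fun y => - f y) z r) as [y [Hy Hfy]]; try lra.
- intros a Ha; destruct (Hin a ltac:(lra)) as [Ha0 HaR].
  apply continuity_pt_opp, continuity_pt_filterlim, Hc; assumption.
- destruct (Req_dec (f r) 0) as [H0|H0]; [destruct (Hnz r Hr HrR H0)|lra].
- destruct (Hin y ltac:(lra)) as [Hy0 HyR]; apply (Hnz y Hy0 HyR); lra.
Qed.

Ltac rewrite_derive H :=
  match type of H with
  | is_derive ?f ?x ?l =>
      replace (Derive (fun y => f y) x) with l by (symmetry; exact (is_derive_unique _ _ _ H))
  end.

Lemma RInt_continuous_primitive (g : R -> R) (b : R) : 0 < b ->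
  (forall c, c < b -> continuous g c) ->
  (forall y, y < b -> ex_RInt g 0 y) /\
  (forall x, x < b -> is_derive (RInt g 0) x (g x)).
Proof.
intros Hb Hg.
assert (Hex : forall y, y < b -> ex_RInt g 0 y).
{ intros y Hy; apply (ex_RInt_continuous (V := R_CompleteNormedModule)).
  intros z [_ Hz]; apply Hg, Rle_lt_trans with (1 := Hz), Rmax_lub_lt; lra. }
split; [exact Hex|].
intros x Hx; apply (is_derive_RInt g (RInt g 0) 0); [|exact (Hg x Hx)].
destruct (open_lt b x Hx) as [e He].
exists e; intros y Hy; apply (RInt_correct (V := R_CompleteNormedModule)), Hex, He, Hy.
Qed.

Section RightPrimitive.
Variables (f : R -> R) (l : R) (Rb : Rbar).
Hypothesis f_cont : forall c, 0 < c -> Rbar_lt c Rb -> continuous f c.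
Hypothesis f_lim : filterlim f (at_right 0) (locally l).

Lemma continuous_extension_right (b : R) : 0 < b -> Rbar_le b Rb ->
  exists g : R -> R, (forall c, c < b -> continuous g c) /\ (forall c, 0 < c -> g c = f c).
Proof.
intros Hb HbR.
assert (Hfc : forall c, 0 < c < b -> continuous f c).
{ intros c Hc; apply f_cont; [lra|].
  apply Rbar_lt_le_trans with (Finite b); [simpl; lra|exact HbR]. }
destruct (C0_extension_left f l 0 b Hb Hfc f_lim) as [g [Hg [Hgf _]]].
exists g; split; assumption.
Qed.

Lemma ex_RInt_right y : 0 <= y -> Rbar_lt y Rb -> ex_RInt f 0 y.
Proof.
intros Hy HyR; destruct (Rbar_lt_real_le y Rb HyR) as [b [Hyb HbR]].
destruct (continuous_extension_right b ltac:(lra) HbR) as [g [Hg Hgf]].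
apply (ex_RInt_ext (V := R_CompleteNormedModule)) with g.
- intros x Hx; rewrite Rmin_left in Hx by lra; apply Hgf; lra.
- exact (proj1 (RInt_continuous_primitive g b ltac:(lra) Hg) y Hyb).
Qed.

Lemma is_derive_RInt_right x : 0 < x -> Rbar_lt x Rb -> is_derive (RInt f 0) x (f x).
Proof.
intros Hx HxR; apply (is_derive_RInt f (RInt f 0) 0); [|exact (f_cont x Hx HxR)].
apply filter_imp with (2 := locally_in_interval Rb x Hx HxR); intros y [Hy HyR].
apply (RInt_correct (V := R_CompleteNormedModule)), ex_RInt_right; [lra|exact HyR].
Qed.

Lemma RInt_right_lim : Rbar_lt 0 Rb -> filterlim (RInt f 0) (at_right 0) (locally 0).
Proof.
intros H0; destruct (Rbar_lt_real_le 0 Rb H0) as [b [Hb HbR]].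
destruct (continuous_extension_right b Hb HbR) as [g [Hg Hgf]].
apply filterlim_ext_loc with (RInt g 0).
- exists (mkposreal b Hb); intros y _ Hy; apply RInt_ext; intros x Hx.
  rewrite Rmin_left in Hx by lra; apply Hgf; lra.
- assert (Hc : continuous (RInt g 0) 0).
  { apply (ex_derive_continuous (V := R_NormedModule)); eexists.
    exact (proj2 (RInt_continuous_primitive g b Hb Hg) 0 Hb). }
  unfold continuous in Hc; rewrite RInt_point in Hc.
  intros P HP; destruct (Hc P HP) as [e He].
  exists e; intros y Hy _; exact (He y Hy).
Qed.

End RightPrimitive.

Section Mass.
Variables (rho : R -> R) (Rb : Rbar).
Hypothesis rho_lim : filterlim rho (at_right 0) (locally (rho 0)).
Hypothesis rho_cont : forall r, 0 < r -> Rbar_lt r Rb -> continuous rho r.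

Let mass_integrand_cont c : 0 < c -> Rbar_lt c Rb -> continuous (fun s => rho s * s ^ 2) c.
Proof.
intros Hc HcR; apply (continuous_mult (K := R_AbsRing)); [exact (rho_cont c Hc HcR)|].
apply continuity_pt_filterlim, derivable_continuous_pt, derivable_pt_pow.
Qed.

Let mass_integrand_lim : filterlim (fun s => rho s * s ^ 2) (at_right 0) (locally (rho 0 * 0 ^ 2)).
Proof. filterlim_tac. Qed.

Lemma mass_derive r : 0 < r -> Rbar_lt r Rb -> is_derive (mass rho) r (4 * PI * (rho r * r ^ 2)).
Proof.
intros Hr HrR; apply (is_derive_scal (fun y => RInt (fun s => rho s * s ^ 2) 0 y)).
exact (is_derive_RInt_right _ _ Rb mass_integrand_cont mass_integrand_lim r Hr HrR).
Qed.

Lemma tov_derive_continuous (p : R -> R) r : 0 < r -> Rbar_lt r Rb ->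
  0 < 1 - 2 * mass rho r / r ->
  (forall y, 0 < y -> Rbar_lt y Rb -> is_derive p y (tov_rhs rho p y)) ->
  continuous (Derive p) r.
Proof.
intros Hr HrR HA Hp.
apply continuous_ext_loc with (tov_rhs rho p).
- apply filter_imp with (2 := locally_in_interval Rb r Hr HrR); intros y [Hy HyR].
  symmetry; exact (is_derive_unique _ _ _ (Hp y Hy HyR)).
- assert (Hrho : continuous rho r) by exact (rho_cont r Hr HrR).
  assert (Hpc : continuous p r).
  { apply (ex_derive_continuous (V := R_NormedModule)); eexists; exact (Hp r Hr HrR). }
  assert (Hmc : continuous (mass rho) r).
  { apply (ex_derive_continuous (V := R_NormedModule)); eexists; exact (mass_derive r Hr HrR). }
  assert (Hden : r ^ 2 * (1 - 2 * mass rho r / r) <> 0).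
  { apply Rgt_not_eq, Rmult_lt_0_compat; [apply pow_lt|]; lra. }
  unfold continuous, tov_rhs, Rdiv, Rminus in *; filterlim_tac; try exact Hden; lra.
Qed.

Hypothesis Rb_pos : Rbar_lt 0 Rb.

(* Near the centre |rho| <= K, so |m(r)| <= 4 pi K r^3. *)
Lemma mass_div_sqr_lim : filterlim (fun r => mass rho r / r ^ 2) (at_right 0) (locally 0).
Proof.
set (K := Rabs (rho 0) + 1).
assert (HK : 0 < K) by (unfold K; pose proof (Rabs_pos (rho 0)); lra).
assert (Hnear : at_right 0 (fun t => Rabs (rho t - rho 0) < 1 /\ Rbar_lt t Rb)).
{ apply filter_and; [exact (rho_lim _ (locally_ball (rho 0) (mkposreal 1 Rlt_0_1)))|].
  apply filter_imp with (2 := at_right_in_interval Rb Rb_pos); tauto. }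
destruct Hnear as [d Hd].
apply (filterlim_le_le (fun r => - (4 * PI * K) * r) _ (fun r => 4 * PI * K * r) 0).
- exists d; intros r Hr Hr0.
  assert (Hball : forall t, 0 < t <= r -> ball 0 d t).
  { intros t Ht; apply Rabs_lt_between'; simpl in Hr; apply Rabs_lt_between' in Hr; lra. }
  assert (Hbound : Rabs (RInt (fun s => rho s * s ^ 2) 0 r) <= (r - 0) * (K * r ^ 2)).
  { apply abs_RInt_le_const; [lra| |].
    - apply ex_RInt_right with (l := rho 0 * 0 ^ 2) (Rb := Rb);
        [exact mass_integrand_cont|exact mass_integrand_lim|lra|exact (proj2 (Hd r Hr Hr0))].
    - intros t Ht; rewrite Rabs_mult, (Rabs_pos_eq (t ^ 2)) by apply pow2_ge_0.
      destruct (Req_dec t 0) as [->|Ht0].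
      + rewrite pow_i by auto; rewrite Rmult_0_r; apply Rmult_le_pos; [lra|apply pow2_ge_0].
      + destruct (Hd t (Hball t ltac:(lra)) ltac:(lra)) as [Hrho _].
        pose proof (Rabs_triang_inv (rho t) (rho 0)).
        apply Rmult_le_compat; [apply Rabs_pos|apply pow2_ge_0|unfold K; lra|apply pow_incr; lra]. }
  assert (Hr2 : 0 < r ^ 2) by (apply pow_lt; lra).
  assert (Hm : Rabs (mass rho r / r ^ 2) <= 4 * PI * K * r).
  { unfold mass; rewrite Rabs_div, Rabs_mult, (Rabs_pos_eq (4 * PI)), (Rabs_pos_eq (r ^ 2)) by
      (pose proof PI_RGT_0; lra).
    apply Rle_div_l; [exact Hr2|].
    replace (4 * PI * K * r * r ^ 2) with (4 * PI * ((r - 0) * (K * r ^ 2))) by ring.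
    apply Rmult_le_compat_l; [pose proof PI_RGT_0; lra|exact Hbound]. }
  apply Rabs_le_between in Hm; lra.
- apply (filterlim_locally_eq _ (- (4 * PI * K) * 0)); [filterlim_tac|ring].
- apply (filterlim_locally_eq _ (4 * PI * K * 0)); [filterlim_tac|ring].
Qed.

Lemma metric_factor_lim : filterlim (fun r => 1 - 2 * mass rho r / r) (at_right 0) (locally 1).
Proof.
apply filterlim_ext_loc with (fun r => 1 + - (2 * (r * (mass rho r / r ^ 2)))).
- exists (mkposreal 1 Rlt_0_1); intros r _ Hr; field; lra.
- pose proof mass_div_sqr_lim.
  apply (filterlim_locally_eq _ (1 + - (2 * (0 * 0)))); [filterlim_tac|ring].
Qed.

End Mass.

Definition D_integrand (rho p : R -> R) (s : R) : R :=
  s * exp (-2 * I0 rho p s) / sqrt (1 - 2 * mass rho s / s).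

Definition D_integral (rho p : R -> R) (r : R) : R := RInt (D_integrand rho p) 0 r.

Lemma Dfun_D_integral (rho p : R -> R) (dpc : R) :
  Dfun rho p dpc = fun r => 1 + 4 * PI * dpc * D_integral rho p r.
Proof. reflexivity. Qed.

Definition pert_scale (rho p : R -> R) (r : R) : R :=
  sqrt (1 - 2 * mass rho r / r) * exp (-2 * I0 rho p r).

Definition pert_ratio (rho p0 p : R -> R) (r : R) : R := (p r - p0 r) / pert_scale rho p0 r.

Lemma riccati_solution_derive (K : R -> R) (k c d r : R) :
  is_derive K r k -> 1 + c * d * K r <> 0 ->
  is_derive (fun y => d / (1 + c * d * K y)) r (- c * k * (d / (1 + c * d * K r)) ^ 2).
Proof.
intros HK Hnz; auto_derive.
- split; [eexists; exact HK|split; [exact Hnz|exact I]].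
- rewrite_derive HK; field; exact Hnz.
Qed.

(* (v D - d)' = -c k v (v D - d) along a solution v of v' = -c k v^2, where D = 1 + c d K. *)
Lemma riccati_first_integral (v K Phi : R -> R) (k c d r : R) :
  is_derive v r (- c * k * v r ^ 2) -> is_derive K r k -> is_derive Phi r (c * k * v r) ->
  is_derive (fun y => (v y * (1 + c * d * K y) - d) * exp (Phi y)) r 0.
Proof.
intros Hv HK HPhi; auto_derive.
- repeat split; eexists; eassumption.
- rewrite_derive Hv; rewrite_derive HK; rewrite_derive HPhi; ring.
Qed.

Section BaseSolution.
Variables (rho0 p0 : R -> R) (Rb : Rbar) (p0c : R).
Hypothesis Rb_pos : Rbar_lt 0 Rb.
Hypothesis tov0 : solves_TOV rho0 p0 Rb.
Hypothesis p0_lim : filterlim p0 (at_right 0) (locally p0c).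

Let rho0_lim := proj1 tov0.
Let rho0_cont := proj1 (proj2 tov0).
Let metric_factor_pos := proj1 (proj2 (proj2 (proj2 tov0))).
Let p0_tov := proj2 (proj2 (proj2 (proj2 tov0))).

(* The form into which [auto_derive] normalizes [1 - 2 * mass rho0 r / r]. *)
Let metric_factor_pos' r : 0 < r -> Rbar_lt r Rb -> 0 < 1 + - (2 * mass rho0 r * / r).
Proof. exact (metric_factor_pos r). Qed.

Let radius_gt_2mass r : 0 < r -> Rbar_lt r Rb -> 0 < r - 2 * mass rho0 r.
Proof.
intros Hr HrR; replace (r - 2 * mass rho0 r) with (r * (1 - 2 * mass rho0 r / r)) by (field; lra).
exact (Rmult_lt_0_compat _ _ Hr (metric_factor_pos r Hr HrR)).
Qed.

Let mass0_derive := mass_derive rho0 Rb rho0_lim rho0_cont.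

Lemma g0_continuous r : 0 < r -> Rbar_lt r Rb -> continuous (g0 rho0 p0) r.
Proof.
intros Hr HrR; apply (ex_derive_continuous (V := R_NormedModule)); unfold g0.
pose proof (metric_factor_pos' r Hr HrR).
auto_derive; repeat split; try (eexists; eauto); try lra.
apply Rgt_not_eq; repeat apply Rmult_lt_0_compat; lra.
Qed.

Lemma g0_lim : filterlim (g0 rho0 p0) (at_right 0) (locally 0).
Proof.
pose proof (mass_div_sqr_lim rho0 Rb rho0_lim rho0_cont Rb_pos).
pose proof (metric_factor_lim rho0 Rb rho0_lim rho0_cont Rb_pos).
apply filterlim_ext_loc with
  (fun r => (mass rho0 r / r ^ 2 + 4 * PI * (p0 r * r)) * / (1 - 2 * mass rho0 r / r)).
- apply filter_imp with (2 := at_right_in_interval Rb Rb_pos); intros r [Hr HrR].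
  pose proof (radius_gt_2mass r Hr HrR); unfold g0; field; lra.
- apply (filterlim_locally_eq _ ((0 + 4 * PI * (p0c * 0)) * / 1)); [filterlim_tac; lra|field].
Qed.

Lemma I0_derive r : 0 < r -> Rbar_lt r Rb -> is_derive (I0 rho0 p0) r (g0 rho0 p0 r).
Proof. exact (is_derive_RInt_right _ _ Rb g0_continuous g0_lim r). Qed.

Lemma I0_lim : filterlim (I0 rho0 p0) (at_right 0) (locally 0).
Proof. exact (RInt_right_lim _ _ Rb g0_continuous g0_lim Rb_pos). Qed.

Lemma D_integrand_continuous r : 0 < r -> Rbar_lt r Rb -> continuous (D_integrand rho0 p0) r.
Proof.
intros Hr HrR; apply (ex_derive_continuous (V := R_NormedModule)); unfold D_integrand.
pose proof (metric_factor_pos' r Hr HrR).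
auto_derive; repeat split; try (eexists; eauto using I0_derive); try lra.
apply Rgt_not_eq, sqrt_lt_R0; lra.
Qed.

Lemma D_integrand_lim : filterlim (D_integrand rho0 p0) (at_right 0) (locally 0).
Proof.
pose proof (metric_factor_lim rho0 Rb rho0_lim rho0_cont Rb_pos); pose proof I0_lim.
unfold D_integrand, Rdiv.
apply (filterlim_locally_eq _ (0 * exp (-2 * 0) * / sqrt 1)); [filterlim_tac|ring].
rewrite sqrt_1; lra.
Qed.

Lemma D_integral_derive r : 0 < r -> Rbar_lt r Rb ->
  is_derive (D_integral rho0 p0) r (D_integrand rho0 p0 r).
Proof. exact (is_derive_RInt_right _ _ Rb D_integrand_continuous D_integrand_lim r). Qed.

Lemma D_integral_lim : filterlim (D_integral rho0 p0) (at_right 0) (locally 0).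
Proof. exact (RInt_right_lim _ _ Rb D_integrand_continuous D_integrand_lim Rb_pos). Qed.

Lemma pert_scale_pos r : 0 < r -> Rbar_lt r Rb -> 0 < pert_scale rho0 p0 r.
Proof.
intros Hr HrR; apply Rmult_lt_0_compat; [|apply exp_pos].
apply sqrt_lt_R0, metric_factor_pos; assumption.
Qed.

Lemma pert_scale_lim : filterlim (pert_scale rho0 p0) (at_right 0) (locally 1).
Proof.
pose proof (metric_factor_lim rho0 Rb rho0_lim rho0_cont Rb_pos); pose proof I0_lim.
unfold pert_scale; apply (filterlim_locally_eq _ (sqrt 1 * exp (-2 * 0))); [filterlim_tac|].
rewrite sqrt_1, Rmult_0_r, exp_0; ring.
Qed.

(* The terms linear in [p - p0] cancel: the logarithmic derivative of [pert_scale] is the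
   first-order part of the TOV right-hand side. *)
Lemma pert_ratio_derive (p : R -> R) (dp r : R) : 0 < r -> Rbar_lt r Rb -> is_derive p r dp ->
  is_derive (pert_ratio rho0 p0 p) r
    (- (4 * PI) * D_integrand rho0 p0 r * pert_ratio rho0 p0 p r ^ 2
     + (dp - tov_rhs rho0 p r) / pert_scale rho0 p0 r).
Proof.
intros Hr HrR Hp.
pose proof (metric_factor_pos' r Hr HrR) as HA.
pose proof (mass0_derive r Hr HrR) as Hm; pose proof (I0_derive r Hr HrR) as HI.
pose proof (p0_tov r Hr HrR) as Hp0.
unfold pert_ratio, pert_scale; auto_derive.
- repeat split; try (eexists; eassumption); try lra.
  apply Rgt_not_eq, Rmult_lt_0_compat; [apply sqrt_lt_R0; lra|apply exp_pos].
- rewrite_derive Hp; rewrite_derive Hp0; rewrite_derive Hm; rewrite_derive HI.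
  unfold tov_rhs, g0, D_integrand, Rminus, Rdiv in *.
  assert (Hs0 : 0 < sqrt (1 + - (2 * mass rho0 r * / r))) by (apply sqrt_lt_R0; lra).
  assert (Hss := sqrt_sqrt _ (Rlt_le _ _ HA)).
  set (s := sqrt (1 + - (2 * mass rho0 r * / r))) in *.
  assert (Hmass : mass rho0 r = r * (1 - s * s) / 2) by (rewrite Hss; field; lra).
  pose proof (exp_pos (-2 * I0 rho0 p0 r)).
  set (e := exp (-2 * I0 rho0 p0 r)) in *.
  clearbody s e; rewrite Hmass; field; lra.
Qed.

Lemma tov_of_riccati (p : R -> R) r : 0 < r -> Rbar_lt r Rb -> ex_derive p r ->
  is_derive (pert_ratio rho0 p0 p) r
    (- (4 * PI) * D_integrand rho0 p0 r * pert_ratio rho0 p0 p r ^ 2) ->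
  is_derive p r (tov_rhs rho0 p r).
Proof.
intros Hr HrR [dp Hp] Hv.
pose proof (is_derive_unique _ _ _ Hv) as E1.
rewrite (is_derive_unique _ _ _ (pert_ratio_derive p dp r Hr HrR Hp)) in E1.
pose proof (pert_scale_pos r Hr HrR).
assert (Hdp : dp = tov_rhs rho0 p r).
{ assert (E2 : (dp - tov_rhs rho0 p r) / pert_scale rho0 p0 r = 0) by lra.
  apply Rmult_integral in E2; destruct E2 as [E2|E2]; [lra|].
  apply Rinv_neq_0_compat in E2; [contradiction|lra]. }
rewrite <- Hdp; exact Hp.
Qed.

Lemma riccati_of_tov (p : R -> R) r : 0 < r -> Rbar_lt r Rb -> is_derive p r (tov_rhs rho0 p r) ->
  is_derive (pert_ratio rho0 p0 p) r
    (- (4 * PI) * D_integrand rho0 p0 r * pert_ratio rho0 p0 p r ^ 2).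
Proof.
intros Hr HrR Hp; pose proof (pert_ratio_derive p _ r Hr HrR Hp) as Hv.
unfold Rminus in Hv; rewrite Rplus_opp_r, Rdiv_0_l, Rplus_0_r in Hv; exact Hv.
Qed.

Section Perturbation.
Variables (dpc : R) (Rb' : Rbar).
Hypothesis Rb'_le : Rbar_le Rb' Rb.
Hypothesis D_pos : forall r, 0 <= r -> Rbar_lt r Rb' -> 0 < Dfun rho0 p0 dpc r.

Let q r := p0 r + dpress rho0 p0 dpc r.

Let in_Rb (r : R) : Rbar_lt r Rb' -> Rbar_lt r Rb.
Proof. intros H; exact (Rbar_lt_le_trans _ _ _ H Rb'_le). Qed.

Let q_ex_derive r : 0 < r -> Rbar_lt r Rb' -> ex_derive q r.
Proof.
intros Hr HrR; pose proof (D_pos r (Rlt_le _ _ Hr) HrR) as HD.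
pose proof (metric_factor_pos' r Hr (in_Rb r HrR)).
unfold q, dpress; rewrite Dfun_D_integral; auto_derive; repeat split.
- eexists; exact (p0_tov r Hr (in_Rb r HrR)).
- eexists; exact (mass0_derive r Hr (in_Rb r HrR)).
- lra.
- assumption.
- eexists; exact (I0_derive r Hr (in_Rb r HrR)).
- eexists; exact (D_integral_derive r Hr (in_Rb r HrR)).
- exact (Rgt_not_eq _ _ HD).
Qed.

Let q_ratio r : 0 < r -> Rbar_lt r Rb' -> pert_ratio rho0 p0 q r = dpc / Dfun rho0 p0 dpc r.
Proof.
intros Hr HrR; pose proof (D_pos r (Rlt_le _ _ Hr) HrR).
unfold pert_ratio, q, dpress, pert_scale.
pose proof (sqrt_lt_R0 _ (metric_factor_pos r Hr (in_Rb r HrR))).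
pose proof (exp_pos (-2 * I0 rho0 p0 r)).
field; lra.
Qed.

Lemma perturbed_tov r : 0 < r -> Rbar_lt r Rb' -> is_derive q r (tov_rhs rho0 q r).
Proof.
intros Hr HrR; apply (tov_of_riccati q r Hr (in_Rb r HrR) (q_ex_derive r Hr HrR)).
rewrite (q_ratio r Hr HrR).
apply (is_derive_ext_loc (fun y => dpc / Dfun rho0 p0 dpc y)).
- apply filter_imp with (2 := locally_in_interval Rb' r Hr HrR); intros y [Hy HyR].
  symmetry; exact (q_ratio y Hy HyR).
- rewrite Dfun_D_integral; apply (riccati_solution_derive (D_integral rho0 p0)).
  + exact (D_integral_derive r Hr (in_Rb r HrR)).
  + apply Rgt_not_eq, (D_pos r (Rlt_le _ _ Hr) HrR).
Qed.

Lemma perturbed_solves_TOV : solves_TOV rho0 q Rb'.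
Proof.
assert (rho0_cont' : forall r, 0 < r -> Rbar_lt r Rb' -> continuous rho0 r).
{ intros r Hr HrR; exact (rho0_cont r Hr (in_Rb r HrR)). }
split; [exact rho0_lim|split; [exact rho0_cont'|split; [|split]]].
- intros r Hr HrR; split; [exact (q_ex_derive r Hr HrR)|].
  exact (tov_derive_continuous rho0 Rb' rho0_lim rho0_cont' q r Hr HrR
    (metric_factor_pos r Hr (in_Rb r HrR)) perturbed_tov).
- intros r Hr HrR; exact (metric_factor_pos r Hr (in_Rb r HrR)).
- exact perturbed_tov.
Qed.

Lemma perturbed_regular_centre : regular_centre rho0 q (p0c + dpc).
Proof.
split; [exact rho0_lim|].
pose proof (metric_factor_lim rho0 Rb rho0_lim rho0_cont Rb_pos).
pose proof (I0_lim); pose proof (D_integral_lim).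
unfold q, dpress, Rdiv; rewrite Dfun_D_integral.
apply (filterlim_locally_eq _ (p0c + dpc * sqrt 1 * exp (-2 * 0) * / (1 + 4 * PI * dpc * 0)));
  [filterlim_tac|]; rewrite ?sqrt_1, ?Rmult_0_r, ?exp_0, ?Rplus_0_r, ?Rinv_1; [lra|ring].
Qed.

End Perturbation.

Section Converse.
Variables (p : R -> R) (pc : R).
Hypothesis tov_p : solves_TOV rho0 p Rb.
Hypothesis p_lim : filterlim p (at_right 0) (locally pc).

Let dpc := pc - p0c.
Let v := pert_ratio rho0 p0 p.
Let p_tov := proj2 (proj2 (proj2 (proj2 tov_p))).

Let v_riccati r (Hr : 0 < r) (HrR : Rbar_lt r Rb) :=
  riccati_of_tov p r Hr HrR (p_tov r Hr HrR).

Let v_lim : filterlim v (at_right 0) (locally dpc).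
Proof.
pose proof pert_scale_lim; unfold v, pert_ratio, dpc, Rdiv, Rminus.
apply (filterlim_locally_eq _ ((pc + - p0c) * / 1)); [filterlim_tac; lra|field].
Qed.

Let phi y := 4 * PI * D_integrand rho0 p0 y * v y.

Let phi_cont r : 0 < r -> Rbar_lt r Rb -> continuous phi r.
Proof.
intros Hr HrR; apply (continuous_mult (K := R_AbsRing)).
- apply (continuous_mult (K := R_AbsRing)); [apply continuous_const|].
  exact (D_integrand_continuous r Hr HrR).
- apply (ex_derive_continuous (V := R_NormedModule)); eexists; exact (v_riccati r Hr HrR).
Qed.

Let phi_lim : filterlim phi (at_right 0) (locally (4 * PI * 0 * dpc)).
Proof. pose proof D_integrand_lim; pose proof v_lim; unfold phi; filterlim_tac. Qed.

Lemma pert_ratio_mul_Dfun r : 0 < r -> Rbar_lt r Rb -> v r * Dfun rho0 p0 dpc r = dpc.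
Proof.
set (W := fun y => (v y * (1 + 4 * PI * dpc * D_integral rho0 p0 y) - dpc) * exp (RInt phi 0 y)).
assert (HW : forall y, 0 < y -> Rbar_lt y Rb -> W y = 0).
{ apply const0_of_derive0_lim0.
  - intros y Hy HyR.
    apply (riccati_first_integral v (D_integral rho0 p0) (RInt phi 0) (D_integrand rho0 p0 y)).
    + exact (v_riccati y Hy HyR).
    + exact (D_integral_derive y Hy HyR).
    + exact (is_derive_RInt_right _ _ Rb phi_cont phi_lim y Hy HyR).
  - pose proof D_integral_lim; pose proof (RInt_right_lim _ _ Rb phi_cont phi_lim Rb_pos).
    unfold W, Rminus.
    apply (filterlim_locally_eq _ ((dpc * (1 + 4 * PI * dpc * 0) + - dpc) * exp 0));
      [filterlim_tac|ring]. }
intros Hr HrR; pose proof (HW r Hr HrR) as E; unfold W in E.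
apply Rmult_integral in E; destruct E as [E|E]; [rewrite Dfun_D_integral; lra|].
pose proof (exp_pos (RInt phi 0 r)); lra.
Qed.

Lemma Dfun_pos_of_solution r : 0 <= r -> Rbar_lt r Rb -> 0 < Dfun rho0 p0 dpc r.
Proof.
intros Hr HrR; destruct (Req_dec r 0) as [->|Hr0].
{ rewrite Dfun_D_integral; unfold D_integral; rewrite RInt_point.
  change (0 < 1 + 4 * PI * dpc * 0); lra. }
apply (pos_of_nonzero_lim _ Rb 1); [lra| | | |lra|exact HrR].
- pose proof D_integral_lim; rewrite Dfun_D_integral.
  apply (filterlim_locally_eq _ (1 + 4 * PI * dpc * 0)); [filterlim_tac|ring].
- intros y Hy HyR; apply (ex_derive_continuous (V := R_NormedModule)); rewrite Dfun_D_integral.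
  pose proof (D_integral_derive y Hy HyR); auto_derive; eexists; eassumption.
- (* a zero of D would force dpc = 0, hence D = 1 *)
  intros y Hy HyR HD; pose proof (pert_ratio_mul_Dfun y Hy HyR) as E.
  rewrite HD, Rmult_0_r in E; rewrite Dfun_D_integral in HD; rewrite <- E in HD; lra.
Qed.

Lemma pressure_of_solution r : 0 < r -> Rbar_lt r Rb -> p r = p0 r + dpress rho0 p0 dpc r.
Proof.
intros Hr HrR; pose proof (Dfun_pos_of_solution r (Rlt_le _ _ Hr) HrR).
pose proof (sqrt_lt_R0 _ (metric_factor_pos r Hr HrR)); pose proof (exp_pos (-2 * I0 rho0 p0 r)).
pose proof (pert_ratio_mul_Dfun r Hr HrR) as E.
unfold dpress; set (D := Dfun rho0 p0 dpc r) in *; rewrite <- E.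
unfold v, pert_ratio, pert_scale in *; field; lra.
Qed.

End Converse.

End BaseSolution.

Theorem theoremP1 (rho0 p0 : R -> R) (Rb : Rbar) (p0c : R) :
  Rbar_lt 0 Rb ->
  solves_TOV rho0 p0 Rb ->
  regular_centre rho0 p0 p0c ->
  (forall (dpc : R) (Rb' : Rbar),
      Rbar_lt 0 Rb' -> Rbar_le Rb' Rb ->
      (forall r, 0 <= r -> Rbar_lt r Rb' -> 0 < Dfun rho0 p0 dpc r) ->
      solves_TOV rho0 (fun r => p0 r + dpress rho0 p0 dpc r) Rb' /\
      regular_centre rho0 (fun r => p0 r + dpress rho0 p0 dpc r) (p0c + dpc))
  /\
  (forall (p : R -> R) (pc : R),
      solves_TOV rho0 p Rb ->
      regular_centre rho0 p pc ->
      (forall r, 0 <= r -> Rbar_lt r Rb -> 0 < Dfun rho0 p0 (pc - p0c) r) /\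
      (forall r, 0 < r -> Rbar_lt r Rb -> p r = p0 r + dpress rho0 p0 (pc - p0c) r)).
Proof.
intros Rb_pos tov0 [_ p0_lim]; split.
- intros dpc Rb' _ Rb'_le D_pos; split.
  + exact (perturbed_solves_TOV rho0 p0 Rb p0c Rb_pos tov0 p0_lim dpc Rb' Rb'_le D_pos).
  + exact (perturbed_regular_centre rho0 p0 Rb p0c Rb_pos tov0 p0_lim dpc).
- intros p pc tov_p [_ p_lim]; split.
  + exact (Dfun_pos_of_solution rho0 p0 Rb p0c Rb_pos tov0 p0_lim p pc tov_p p_lim).
  + exact (pressure_of_solution rho0 p0 Rb p0c Rb_pos tov0 p0_lim p pc tov_p p_lim).
Qed.
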